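(* Let $(X,\tau)$ be a Hausdorff extended locally convex space having a neighborhood of $0_X$ that is bounded in $(X,\tau)$. Then there exists an extended norm $\|\cdot\|$ on $X$ with $X_{fin}=\{x\in X:\|x\|<\infty\}$ such that the topology induced by $\|\cdot\|$ (the metric-type topology with basic neighborhoods $\{y:\|y-x\|<\varepsilon\}$) equals $\tau$.
   Context: An extended seminorm on a vector space $X$ over $\mathbb{R}$ or $\mathbb{C}$ is a map $\rho:X\to[0,\infty]$ with $\rho(\alpha x)=|\alpha|\rho(x)$ and $\rho(x+y)\le\rho(x)+\rho(y)$; it is an extended norm if $\rho(x)=0$ only for $x=0_X$. An extended locally convex space $(X,\tau)$ is a vector space with the topology induced by a family $\{\rho_i\}$ of extended seminorms (neighborhood base at $x_0$: $\{x:\max_{i\in J}\rho_i(x-x_0)<\varepsilon\}$, $J$ finite, $\varepsilon>0$). $X_{fin}=\{x\in X:\rho(x)<\infty$ for every $\tau$-continuous extended seminorm $\rho\}$. A set $A\subseteq X$ is bounded in $(X,\tau)$ if for every neighborhood $U$ of $0_X$ there exist $c>0$ and a finite set $P\subseteq A$ with $A\subseteq P+cU$. *)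

From Stdlib Require List.
From HB Require Import structures.
From mathcomp Require Import all_boot all_order all_algebra.
From mathcomp Require Import all_classical all_reals all_analysis.
From mathcomp Require Import complex.
Set Implicit Arguments. Unset Strict Implicit. Unset Printing Implicit Defensive.
Import Order.TTheory GRing.Theory Num.Theory.
Local Open Scope classical_set_scope.
Local Open Scope ring_scope.

(* Generic development over a scalar ring K (to be instantiated with K = R or
   K = R[i]), with absolute value abs : K -> R and the embedding emb : R -> K
   of the (positive) reals used for the dilation c U. *)
Section ELCS.
Variables (R : realType) (K : nzRingType) (abs : K -> R) (emb : R -> K).
Variable X : lmodType K.

Definition ext_seminorm (rho : X -> \bar R) : Prop :=
  [/\ (forall x, (0 <= rho x)%E),
      (forall (a : K) (x : X), rho (a *: x) = ((abs a)%:E * rho x)%E) &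
      (forall x y, (rho (x + y)%R <= rho x + rho y)%E)].

Definition ext_norm (rho : X -> \bar R) : Prop :=
  ext_seminorm rho /\ (forall x, rho x = 0%E -> x = 0).

Definition elcs_open (I : Type) (rho : I -> X -> \bar R) (U : set X) : Prop :=
  forall x0, U x0 -> exists (J : seq I) (eps : R), 0 < eps /\
    [set x | forall i, List.In i J -> (rho i (x - x0)%R < eps%:E)%E] `<=` U.

Definition elcs_nbhd (I : Type) (rho : I -> X -> \bar R) (x : X) (U : set X)
  : Prop := exists V, [/\ elcs_open rho V, V x & V `<=` U].

Definition elcs_hausdorff (I : Type) (rho : I -> X -> \bar R) : Prop :=
  forall x y : X, x <> y -> exists U V,
    [/\ elcs_open rho U, elcs_open rho V, U x, V y & U `&` V = set0].

Definition elcs_continuous (I : Type) (rho : I -> X -> \bar R)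
  (f : X -> \bar R) : Prop :=
  forall W : set (\bar R), open W -> elcs_open rho (f @^-1` W).

Definition X_fin (I : Type) (rho : I -> X -> \bar R) : set X :=
  [set x | forall f : X -> \bar R, ext_seminorm f -> elcs_continuous rho f ->
           (f x < +oo)%E].

Definition elcs_bounded (I : Type) (rho : I -> X -> \bar R) (A : set X)
  : Prop :=
  forall U, elcs_nbhd rho 0 U -> exists (c : R) (P : seq X),
    [/\ 0 < c, (forall p, p \in P -> A p) &
        A `<=` [set x | exists p u, [/\ p \in P, U u & x = p + emb c *: u]]].

End ELCS.

From HB Require Import structures.
From mathcomp Require Import all_boot all_order all_algebra.
From mathcomp Require Import all_classical all_reals all_analysis.
From mathcomp Require Import complex.
From mathcomp Require Import unstable lra.
Import Order.TTheory GRing.Theory Num.Theory.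
Local Open Scope classical_set_scope.
Local Open Scope ring_scope.
Set Implicit Arguments. Unset Strict Implicit. Unset Printing Implicit Defensive.

(* Let U be the bounded neighbourhood of 0 and choose a basic neighbourhood
   {max_(i in J) rho_i < eps} inside it; the candidate norm is
   N := max_(i in J) rho_i.  Every rho_k is dominated by a multiple of N:
   boundedness covers U by m translates p + c B_k of the rho_k-unit ball, and
   if N x < eps / (m + 1) then the m + 1 points 0, x, ..., m x all lie in U,
   so two of them, j1 x and j2 x, share a translate and rho_k x is at most
   rho_k ((j1 - j2) x) < 2 c.  Domination makes N generate tau, makes N a norm
   because tau is Hausdorff, and identifies X_fin with {N < +oo} because every
   tau-continuous extended seminorm is dominated by a finite maximum of the
   rho_i. *)

Section ExtendedSeminorms.
Variables (R : realType) (K : nzRingType) (abs : K -> R) (emb : R -> K).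
Hypotheses (embB : {morph emb : a b / a - b}) (emb1 : emb 1 = 1)
  (abs_emb : forall t, abs (emb t) = `|t|) (abs_ge0 : forall a, 0 <= abs a).
Variable X : lmodType K.

Section Basics.
Variable f : X -> \bar R.
Hypothesis hf : ext_seminorm abs f.

Lemma ext_seminorm_ge0 x : (0 <= f x)%E.
Proof. by case: hf. Qed.

Lemma ext_seminormZ t x : f (emb t *: x) = (`|t|%:E * f x)%E.
Proof. by case: hf => _ fZ _; rewrite fZ abs_emb. Qed.

Lemma ext_seminorm0 : f 0 = 0%E.
Proof. by rewrite -(scaler0 _ (emb 0)) ext_seminormZ normr0 mul0e. Qed.

Lemma ext_seminormN x : f (- x) = f x.
Proof.
have emb0 : emb 0 = 0 by rewrite -(subrr 0) embB subrr.
have embN1 : emb (-1) = -1 by rewrite -sub0r embB emb0 emb1 sub0r.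
by rewrite -scaleN1r -embN1 ext_seminormZ normrN1 mul1e.
Qed.

Lemma ext_seminormD x y : (f (x + y) <= f x + f y)%E.
Proof. by case: hf. Qed.

Lemma ext_seminormB x y : (f (x - y) <= f x + f y)%E.
Proof. by rewrite -[f y]ext_seminormN ext_seminormD. Qed.

Lemma ext_seminormBC x y : f (x - y) = f (y - x).
Proof. by rewrite -ext_seminormN opprB. Qed.

End Basics.

Lemma ext_seminorm_le_of_ball (f g : X -> \bar R) (a b : R) :
  ext_seminorm abs f -> ext_seminorm abs g -> 0 < a -> 0 < b ->
  (forall x, (g x < a%:E)%E -> (f x < b%:E)%E) ->
  forall x, (f x <= (b / a)%:E * g x)%E.
Proof.
move=> hf hg a0 b0 gf x.
have ba0 : 0 < b / a by rewrite divr_gt0.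
case Egx : (g x) (ext_seminorm_ge0 hg x) => [r| |] // r0; last first.
  by rewrite mulry gtr0_sg // mul1e leey.
have f_lt s : r < s -> (f x < (b / a * s)%:E)%E.
  move=> rs; have s0 : 0 < s by rewrite lee_fin in r0; lra.
  have := gf (emb (a / s) *: x).
  rewrite !ext_seminormZ // Egx ger0_norm ?divr_ge0 ?ltW // -EFinM lte_fin.
  rewrite mulrAC ltr_pdivrMr // ltr_pM2l // => /(_ rs).
  rewrite (_ : b / a * s = (a / s)^-1 * b); last first.
    by rewrite invf_div [RHS]mulrC mulrA mulrAC.
  by rewrite [(_^-1 * b)%:E]EFinM lte_pdivlMl ?divr_gt0.
have r_lt : r < r + 1 by rewrite ltrDl.
case Efx : (f x) (ext_seminorm_ge0 hf x) (f_lt _ r_lt) => [y| |] // _ _.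
rewrite -EFinM lee_fin -ler_pdivrMl //.
apply/ler_gtP => s rs; rewrite ler_pdivrMl // ltW //.
by have := f_lt s rs; rewrite Efx lte_fin.
Qed.

Lemma ext_seminorm_lt_of_multiples (f : X -> \bar R) (P : seq X) (c : R) (x : X) :
  ext_seminorm abs f ->
  (forall j, (j <= size P)%N ->
     exists2 p, p \in P & (f (emb j%:R *: x - p)%R < c%:E)%E) ->
  (f x < (2 * c)%:E)%E.
Proof.
move=> hf near_P.
have cell (j : 'I_(size P).+1) : exists i : 'I_(size P),
    (f (emb j%:R *: x - nth 0 P i)%R < c%:E)%E.
  have [p pP fp] := near_P j (ltn_ord j).
  have ip : (index p P < size P)%N by rewrite index_mem.
  by exists (Ordinal ip); rewrite nth_index.
have [cell_of cellP] := choice cell.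
have [j1 [j2 [same_cell j12]]] :
    exists j1 j2 : 'I_(size P).+1, cell_of j1 = cell_of j2 /\ j1 != j2.
  apply: contrapT => noncoll.
  have inj : injective cell_of.
    by move=> j1 j2 e12; apply/eqP/negPn/negP => ne; apply: noncoll; exists j1, j2.
  by have := leq_card _ inj; rewrite !card_ord ltnn.
have dist1 : 1 <= `|j1%:R - j2%:R : R|.
  rewrite ler_normr; case: (ltngtP j1 j2) => h.
  - have : (j1 + 1)%:R <= j2%:R :> R by rewrite ler_nat addn1.
    by rewrite natrD => ?; apply/orP; right; lra.
  - have : (j2 + 1)%:R <= j1%:R :> R by rewrite ler_nat addn1.
    by rewrite natrD => ?; apply/orP; left; lra.
  - by move/val_inj: h j12 => ->; rewrite eqxx.
have [fu1 fu2] := (cellP j1, cellP j2).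
rewrite same_cell in fu1.
set p := nth 0 P (cell_of j2) in fu1 fu2.
have diff : emb (j1%:R - j2%:R) *: x = (emb j1%:R *: x - p) - (emb j2%:R *: x - p).
  by rewrite embB scalerBl opprB addrA subrK.
apply: le_lt_trans (_ : f x <= f (emb (j1%:R - j2%:R) *: x))%E _.
  by rewrite ext_seminormZ // lee_pemull ?ext_seminorm_ge0 ?lee_fin.
rewrite diff; apply: le_lt_trans (ext_seminormB hf _ _) _.
by rewrite mulr_natl mulr2n EFinD lteD.
Qed.

Section MaxSeminorm.
Variables (I : Type) (rho : I -> X -> \bar R).

Definition max_seminorm (J : seq I) (x : X) : \bar R :=
  foldr (fun i m => maxe (rho i x) m) 0%E J.

Lemma max_seminorm_lt J x e : (0 < e)%E ->
  (max_seminorm J x < e)%E <-> (forall i, List.In i J -> (rho i x < e)%E).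
Proof.
move=> e0; elim: J => [|j J IH] /=; first by split.
rewrite gt_max; split.
- by move=> /andP[rj /IH rJ] i [<-|/rJ].
- move=> rJ; apply/andP; split; first by apply: rJ; left.
  by apply/IH => i iJ; apply: rJ; right.
Qed.

Lemma max_seminorm_le_scale (g : X -> \bar R) : (forall x, (0 <= g x)%E) ->
  (forall k, exists2 C, 0 < C & forall x, (rho k x <= C%:E * g x)%E) ->
  forall J, exists2 C, 0 < C & forall x, (max_seminorm J x <= C%:E * g x)%E.
Proof.
move=> g0 dom; elim=> [|k J [C C0 leJ]] /=.
  by exists 1 => // x; rewrite mul1e.
have [Ck Ck0 lek] := dom k.
exists (Num.max Ck C); first by rewrite lt_max Ck0.
move=> x; rewrite ge_max; apply/andP; split.
  by apply: le_trans (lek x) _; apply: lee_wpmul2r; rewrite ?lee_fin ?le_max ?lexx.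
by apply: le_trans (leJ x) _; apply: lee_wpmul2r; rewrite ?lee_fin ?le_max ?lexx ?orbT.
Qed.

Hypothesis rhoS : forall i, ext_seminorm abs (rho i).

Lemma max_seminorm_ext J : ext_seminorm abs (max_seminorm J).
Proof.
elim: J => [|j J [IH0 IHZ IHD]] /=.
  by split=> [//|a x|x y]; rewrite ?mule0 ?adde0.
split.
- by move=> x /=; rewrite le_max IH0 orbT.
- move=> a x /=; case: (rhoS j) => _ rZ _.
  by rewrite rZ IHZ maxe_pMr // lee_fin.
- move=> x y /=; rewrite ge_max; apply/andP; split.
    apply: le_trans (ext_seminormD (rhoS j) x y) _.
    by apply: leeD; rewrite le_max lexx.
  by apply: le_trans (IHD x y) _; apply: leeD; rewrite le_max lexx orbT.
Qed.

End MaxSeminorm.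

Lemma max_seminorm_const_le (I : Type) (N : X -> \bar R) J x : (0 <= N x)%E ->
  (max_seminorm (fun _ : I => N) J x <= N x)%E.
Proof. by move=> N0; elim: J => //= i J IH; rewrite ge_max lexx. Qed.

Lemma max_seminorm_const1 (I : Type) (N : X -> \bar R) (i : I) x :
  (0 <= N x)%E -> max_seminorm (fun _ : I => N) [:: i] x = N x.
Proof. by move=> N0; rewrite /= max_l. Qed.

Lemma elcs_open_dominated (I1 I2 : Type)
    (rho1 : I1 -> X -> \bar R) (rho2 : I2 -> X -> \bar R) :
  (forall J1, exists J2, exists2 C, 0 < C &
     forall x, (max_seminorm rho1 J1 x <= C%:E * max_seminorm rho2 J2 x)%E) ->
  forall U, elcs_open rho1 U -> elcs_open rho2 U.
Proof.
move=> dom U oU x0 /oU [J1 [e [e0 ballU]]].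
have [J2 [C C0 le12]] := dom J1.
exists J2, (e / C); split=> [|x hx]; first by rewrite divr_gt0.
have hmax : (max_seminorm rho2 J2 (x - x0) < (e / C)%:E)%E.
  by apply/max_seminorm_lt => //; rewrite lte_fin divr_gt0.
apply: ballU; apply/max_seminorm_lt; first by rewrite lte_fin.
apply: le_lt_trans (le12 _) _.
by rewrite -lte_pdivlMl // -EFinM mulrC.
Qed.

Section Topology.
Variables (I : Type) (rho : I -> X -> \bar R).
Hypothesis rhoS : forall i, ext_seminorm abs (rho i).

Lemma elcs_open_ball k (e : R) : elcs_open rho [set y | (rho k y < e%:E)%E].
Proof.
move=> x0 /=.
case Ex0 : (rho k x0) (ext_seminorm_ge0 (rhoS k) x0) => [r| |] //= r0 re.
exists [:: k], (e - r); split; first by rewrite lte_fin in re; lra.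
move=> x /= near_x0.
have := ext_seminormD (rhoS k) (x - x0) x0; rewrite subrK Ex0 => /le_lt_trans; apply.
move: (near_x0 k (or_introl erefl)) (ext_seminorm_ge0 (rhoS k) (x - x0)).
case: (rho k (x - x0)) => [d| |] //=; rewrite !lte_fin => dr _; lra.
Qed.

Lemma elcs_continuous_ext_seminorm (f : X -> \bar R) : ext_seminorm abs f ->
  (forall e : R, 0 < e -> exists J, exists2 eps, 0 < eps &
     forall z, (max_seminorm rho J z < eps%:E)%E -> (f z < e%:E)%E) ->
  elcs_continuous rho f.
Proof.
move=> hf cont0 W oW x0 Wx0.
have upper x : (f x <= f (x - x0)%R + f x0)%E.
  by have := ext_seminormD hf (x - x0) x0; rewrite subrK.
have lower x : (f x0 <= f x + f (x - x0)%R)%E.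
  by have := ext_seminormD hf x (x0 - x); rewrite addrC subrK ext_seminormBC.
have near_x0 e : 0 < e -> exists J eps, 0 < eps /\
    [set x | forall i, List.In i J -> (rho i (x - x0)%R < eps%:E)%E]
      `<=` [set x | (f (x - x0)%R < e%:E)%E].
  move=> e0; have [J [eps eps0 small]] := cont0 e e0.
  exists J, eps; split=> // x near; apply: small.
  by apply/max_seminorm_lt => //; rewrite lte_fin.
have : nbhs (f x0) W by apply: open_nbhs_nbhs.
have Wfx0 : W (f x0) := Wx0.
move: upper lower Wfx0.
case: (f x0) (ext_seminorm_ge0 hf x0) => [r| |] // r0 upper lower Wr.
- rewrite /nbhs /= => /nbhs_ballP [e /= e0 ballW].
  have [J [eps [eps0 sub]]] := near_x0 e e0.
  exists J, eps; split=> // x /sub /=.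
  move: (upper x) (lower x).
  case: (f (x - x0)) (ext_seminorm_ge0 hf (x - x0)) => [d| |] //= d0.
  case: (f x) (ext_seminorm_ge0 hf x) => [y| |] //= y0.
  rewrite !lee_fin lte_fin => up lo dr; apply: ballW.
  by rewrite /ball /= ltr_norml; apply/andP; split; lra.
- move=> _; have [J [eps [eps0 sub]]] := near_x0 1 ltr01.
  exists J, eps; split=> // x /sub /=; move: (lower x).
  by case: (f (x - x0)) => [d| |] //; case: (f x).
Qed.

Lemma elcs_continuous_dominated (f : X -> \bar R) :
  ext_seminorm abs f -> elcs_continuous rho f ->
  exists J, exists2 C, 0 < C & forall x, (f x <= C%:E * max_seminorm rho J x)%E.
Proof.
move=> hf fcont.
have W1 : open [set y : \bar R | (y < 1%:E)%E] by apply: open_ereal_lt_ereal.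
have W1f0 : (f @^-1` [set y | (y < 1%:E)%E]) 0.
  by rewrite /preimage /= ext_seminorm0 // lte_fin.
have [J [eps [eps0 small]]] := fcont _ W1 0 W1f0.
exists J, (1 / eps); first by rewrite divr_gt0.
apply: ext_seminorm_le_of_ball (max_seminorm_ext rhoS J) _ _ _ => // x.
move=> /max_seminorm_lt Jx; apply: small => i iJ; rewrite subr0; exact: Jx.
Qed.

Lemma elcs_hausdorff_eq0 x : elcs_hausdorff rho ->
  (forall J, max_seminorm rho J x = 0%E) -> x = 0.
Proof.
move=> hausdorff max0; apply: contrapT => /hausdorff [W1 [W2 [_ oW2 W1x W20 disj]]].
have [J [e [e0 ballW2]]] := oW2 0 W20.
suff W2x : W2 x by have : (W1 `&` W2) x by []; rewrite disj.
apply: ballW2 => i iJ; rewrite subr0.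
by apply/(max_seminorm_lt _ _ _ _).1: iJ; rewrite ?max0 lte_fin.
Qed.

Lemma bounded_ball_dominated (U : set X) (J : seq I) (eps : R) :
  elcs_bounded emb rho U -> 0 < eps ->
  [set x | (max_seminorm rho J x < eps%:E)%E] `<=` U ->
  forall k, exists2 C, 0 < C & forall x, (rho k x <= C%:E * max_seminorm rho J x)%E.
Proof.
move=> Ubd eps0 ballU k.
have ball_k : elcs_nbhd rho 0 [set y | (rho k y < 1%:E)%E].
  exists [set y | (rho k y < 1%:E)%E]; split=> //; first exact: elcs_open_ball.
  by rewrite /= ext_seminorm0 // lte_fin.
have [c [P [c0 _ cover]]] := Ubd _ ball_k.
set m := size P.
have NS := max_seminorm_ext rhoS J.
have small x : (max_seminorm rho J x < (eps / m.+1%:R)%:E)%E ->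
    (rho k x < (2 * c)%:E)%E.
  move=> hx; apply: (@ext_seminorm_lt_of_multiples _ P) => // j jm.
  have : U (emb j%:R *: x).
    apply: ballU; rewrite /= (ext_seminormZ NS) ger0_norm //.
    move: hx; case: (max_seminorm rho J x) (ext_seminorm_ge0 NS x) => [r| |] // r0.
    rewrite lee_fin in r0; rewrite -EFinM !lte_fin ltr_pdivlMr ?ltr0n // -natr1 => hr.
    have : j%:R <= m%:R :> R by rewrite ler_nat.
    nra.
  move=> /cover [p [u [pP uk ->]]]; exists p => //.
  rewrite addrC addKr (ext_seminormZ (rhoS k)) ger0_norm ?ltW //.
  by rewrite -[X in (_ < X)%E]mule1 lte_pmul2l.
exists (2 * c / (eps / m.+1%:R)); first by rewrite !divr_gt0 ?mulr_gt0.
by apply: ext_seminorm_le_of_ball small; rewrite ?divr_gt0 ?mulr_gt0.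
Qed.

Theorem ext_norm_of_bounded_nbhd : elcs_hausdorff rho ->
  (exists U, elcs_nbhd rho 0 U /\ elcs_bounded emb rho U) ->
  exists N : X -> \bar R,
    [/\ ext_norm abs N, X_fin abs rho = [set x | (N x < +oo)%E] &
        forall U, elcs_open (fun _ : unit => N) U <-> elcs_open rho U].
Proof.
move=> hausdorff [U [[V [oV V0 VU]] Ubd]].
have [J [eps [eps0 ballV]]] := oV 0 V0.
have NS := max_seminorm_ext rhoS J.
have ballU : [set x | (max_seminorm rho J x < eps%:E)%E] `<=` U.
  move=> x /max_seminorm_lt Jx; apply/VU/ballV => i iJ; rewrite subr0; exact: Jx.
have dom := max_seminorm_le_scale (ext_seminorm_ge0 NS)
  (bounded_ball_dominated Ubd eps0 ballU).
exists (max_seminorm rho J); split.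
- split=> // x Jx0; apply: elcs_hausdorff_eq0 hausdorff _ => J'.
  have [C _ le] := dom J'; apply/le_anti/andP; split.
    by have := le x; rewrite Jx0 mule0.
  exact: ext_seminorm_ge0 (max_seminorm_ext rhoS J') x.
- apply/seteqP; split=> x.
    apply; first exact: NS.
    apply: elcs_continuous_ext_seminorm => // e e0.
    by exists J; exists e.
  move=> /= Jx f hf /(elcs_continuous_dominated hf) [J' [C C0 fle]].
  have [C' _ le'] := dom J'.
  apply: le_lt_trans (fle x) _; apply: le_lt_trans (lee_wpmul2l _ (le' x)) _.
    by rewrite lee_fin ltW.
  move: Jx; case: (max_seminorm rho J x) (ext_seminorm_ge0 NS x) => [r| |] // _ _.
  by rewrite -!EFinM ltry.
- move=> W; split; apply: elcs_open_dominated => J1.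
  + exists J, 1 => // x; rewrite mul1e.
    exact/max_seminorm_const_le/(ext_seminorm_ge0 NS).
  + have [C C0 le] := dom J1; exists [:: tt], C => // x.
    by rewrite max_seminorm_const1 ?(ext_seminorm_ge0 NS).
Qed.

End Topology.
End ExtendedSeminorms.

Theorem theorem5p8 (R : realType) :
  (forall (X : lmodType R) (I : Type) (rho : I -> X -> \bar R),
     (forall i, ext_seminorm (fun a : R => `|a|) (rho i)) ->
     elcs_hausdorff rho ->
     (exists U, elcs_nbhd rho 0 U /\ elcs_bounded (fun c : R => c) rho U) ->
     exists nrm : X -> \bar R,
       [/\ ext_norm (fun a : R => `|a|) nrm,
           X_fin (fun a : R => `|a|) rho = [set x | (nrm x < +oo)%E] &
           forall U : set X,
             elcs_open (fun _ : unit => nrm) U <-> elcs_open rho U])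
  /\
  (forall (X : lmodType R[i]) (I : Type) (rho : I -> X -> \bar R),
     (forall i, ext_seminorm (@Normc.normc R) (rho i)) ->
     elcs_hausdorff rho ->
     (exists U, elcs_nbhd rho 0 U /\
                elcs_bounded (fun c : R => (c%:C)%C) rho U) ->
     exists nrm : X -> \bar R,
       [/\ ext_norm (@Normc.normc R) nrm,
           X_fin (@Normc.normc R) rho = [set x | (nrm x < +oo)%E] &
           forall U : set X,
             elcs_open (fun _ : unit => nrm) U <-> elcs_open rho U]).
Proof.
split=> X I rho rhoS hausdorff bounded_nbhd.
- exact: (ext_norm_of_bounded_nbhd (abs := fun a : R => `|a|) (emb := fun c : R => c)).
- apply: (ext_norm_of_bounded_nbhd (emb := fun c : R => (c%:C)%C)) => //.
  + by move=> a b; rewrite rmorphB.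
  + by move=> t; rewrite /Normc.normc /= expr0n addr0 sqrtr_sqr.
  + by case=> a b; apply: sqrtr_ge0.
Qed.
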